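(* For all processes $s,t$, $\mathbf{d}_T(s,t)=\sup_{\Psi\in\mathcal{L}^d}\left|[\![\Psi]\!](s)-[\![\Psi]\!](t)\right|$, where $[\![\Psi]\!](u)=1-D(\Psi,\mathcal{L}(u))$.
   Context: PTS $(\mathcal{S},A,\to)$ with finitely supported distributions; processes image-finite and finite. Computations $c=s_0\xrightarrow{a_1}\cdots\xrightarrow{a_n}s_n$ via transitions $s_{i-1}\xrightarrow{a_i}\pi_i$, $s_i\in\mathrm{supp}(\pi_i)$; $\Pr(c)=\prod\pi_i(s_i)$; $|c|=n$; $\mathrm{tr}(c)=a_1\cdots a_n$; maximal = not a proper prefix of another computation from the same process; $\mathcal{C}_{\max}(z)$, $\mathcal{C}_{\max}(z,\alpha)$ those with trace $\alpha$; $\Pr$ of a set is the sum. A resolution of $s$ is a PTS $\mathcal{Z}=(Z,A,\to_{\mathcal{Z}})$ with $\mathrm{corr}\colon Z\to\mathcal{S}$ and initial state $z_s$, $\mathrm{corr}(z_s)=s$, such that $z_s$ is in no target support, every other state is in the support of a target of a transition from a different state, every $z\xrightarrow{a}_{\mathcal{Z}}\pi$ is matched by $\mathrm{corr}(z)\xrightarrow{a}\pi'$ with $\pi(z')=\pi'(\mathrm{corr}(z'))$, and each state has at most one outgoing transition; $\mathrm{res}(s)$ the set of resolutions. $TD_{\mathcal{Z}}(\alpha)=\Pr(\mathcal{C}_{\max}(z,\alpha))$. Kantorovich lifting $\mathcal{K}(d)(\pi,\pi')=\min_\omega\sum\omega(x,y)d(x,y)$ over couplings; Hausdorff lifting $\mathcal{H}(\hat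 d)(X,Y)=\max\{\sup_{x\in X}\inf_{y\in Y}\hat d(x,y),\sup_{y\in Y}\inf_{x\in X}\hat d(y,x)\}$ ($\inf\emptyset=1$, $\sup\emptyset=0$). $d_T(\alpha,\beta)=0$ if $\alpha=\beta$ else $1$; $D_T(\mathcal{Z}_1,\mathcal{Z}_2)=\mathcal{K}(d_T)(TD_{\mathcal{Z}_1},TD_{\mathcal{Z}_2})$; strong trace metric $\mathbf{d}_T(s,t)=\mathcal{H}(D_T)(\mathrm{res}(s),\mathrm{res}(t))$. Logic: trace formulae $\Phi::=\top\mid\langle a\rangle\Phi$, $\mathrm{depth}(\top)=0$, $\mathrm{depth}(\langle a\rangle\Phi)=1+\mathrm{depth}(\Phi)$; $\mathcal{L}^d$ is the set of trace distribution formulae $\bigoplus_{i\in I}r_i\Phi_i$ ($I$ finite nonempty, $\Phi_i$ pairwise distinct, $r_i\in(0,1]$, $\sum r_i=1$), identified with distributions on trace formulae. $c\models\top$ always; $c\models\langle a\rangle\Phi$ iff $c=s\xrightarrow{a}c'$ with $c'\models\Phi$. $s\models\bigoplus_i r_i\Phi_i$ iff some $\mathcal{Z}\in\mathrm{res}(s)$ with initial state $z$ satisfies $\Pr(\{c\in\mathcal{C}_{\max}(z):c\models\Phi_i,|c|=\mathrm{depth}(\Phi_i)\})=r_i$ for all $i$; $\mathcal{L}(s)$ the set of formulae in $\mathcal{L}^d$ satisfied by $s$. $d(\Phi_1,\Phi_2)=0$ if equal, else 1; $D=\mathcal{K}(d)$ on $\mathcal{L}^d$; $D(\Psi,\mathcal{L}')=\inf_{\Psi'\in\mathcal{L}'}D(\Psi,\Psi')$.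 *)

From Stdlib Require Import Reals List Classical ClassicalEpsilon ClassicalDescription.
Import ListNotations.
Open Scope R_scope.
Set Implicit Arguments.

Definition lsum {X : Type} (f : X -> R) (l : list X) : R :=
  fold_right (fun x acc => f x + acc) 0 l.

Definition indic (P : Prop) : R :=
  if excluded_middle_informative P then 1 else 0.

(** supremum of a set of reals; sup of the empty set is 0 *)
Definition Rsup (E : R -> Prop) : R :=
  match excluded_middle_informative (bound E /\ exists x, E x) with
  | left H => proj1_sig (completeness E (proj1 H) (proj2 H))
  | right _ => 0
  end.

(** infimum of a set of reals; inf of the empty set is 1 *)
Definition Rinf (E : R -> Prop) : R :=
  if excluded_middle_informative (exists x, E x)
  then - Rsup (fun y => E (- y)) else 1.

(** sum of f over a finite set given as a predicate (0 if the set is not finite) *)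
Definition fsum {X : Type} (P : X -> Prop) (f : X -> R) : R :=
  match excluded_middle_informative
          (exists l : list X, NoDup l /\ forall x, In x l <-> P x) with
  | left H => lsum f (proj1_sig (constructive_indefinite_description _ H))
  | right _ => 0
  end.

Record fdist (X : Type) := {
  pmf : X -> R;
  fsupp : list X;
  pmf_nonneg : forall x, 0 <= pmf x;
  fsupp_nodup : NoDup fsupp;
  fsupp_spec : forall x, pmf x <> 0 -> In x fsupp;
  pmf_sum : lsum pmf fsupp = 1 }.

Record pts (A : Type) := {
  st : Type;
  trans : st -> A -> fdist st -> Prop }.

(** A computation from s is represented by its list of steps (a_i, pi_i, s_i),
    meaning s_{i-1} --a_i--> pi_i and s_i in supp(pi_i). *)
Definition steps (A S : Type) := list (A * fdist S * S).

Fixpoint valid {A : Type} (P : pts A) (s : st P) (c : steps A (st P)) : Prop :=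
  match c with
  | [] => True
  | (a, pi, s') :: c' => trans P s a pi /\ 0 < pmf pi s' /\ valid P s' c'
  end.

Definition Prc {A S : Type} (c : steps A S) : R :=
  fold_right (fun stp acc => let '(_, pi, s') := stp in pmf pi s' * acc) 1 c.

Definition trace {A S : Type} (c : steps A S) : list A :=
  map (fun stp => fst (fst stp)) c.

Definition maximal {A : Type} (P : pts A) (s : st P) (c : steps A (st P)) : Prop :=
  valid P s c /\ ~ (exists ext, ext <> [] /\ valid P s (c ++ ext)).

Definition Cmax {A : Type} (P : pts A) (s : st P) (alpha : list A)
  (c : steps A (st P)) : Prop :=
  maximal P s c /\ trace c = alpha.

Definition last_state {A S : Type} (s : S) (c : steps A S) : S :=
  fold_left (fun _ stp => snd stp) c s.

Definition reachable {A : Type} (P : pts A) (s u : st P) : Prop :=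
  exists c, valid P s c /\ last_state s c = u.

Definition image_finite {A : Type} (P : pts A) (s : st P) : Prop :=
  forall u, reachable P s u -> forall a : A,
    exists l : list (fdist (st P)), forall pi, trans P u a pi -> In pi l.

Definition finite_proc {A : Type} (P : pts A) (s : st P) : Prop :=
  exists N : nat, forall c, valid P s c -> (length c <= N)%nat.

Record resolution {A : Type} (P : pts A) (s : st P) := {
  rpts : pts A;
  corr : st rpts -> st P;
  rinit : st rpts;
  r_corr_init : corr rinit = s;
  r_init_fresh : forall z a pi, trans rpts z a pi -> ~ (0 < pmf pi rinit);
  r_reach : forall z', z' <> rinit ->
      exists z a pi, z <> z' /\ trans rpts z a pi /\ 0 < pmf pi z';
  r_match : forall z a pi, trans rpts z a pi ->
      exists pi', trans P (corr z) a pi' /\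
                  forall z', pmf pi z' = pmf pi' (corr z');
  r_det : forall z a1 pi1 a2 pi2,
      trans rpts z a1 pi1 -> trans rpts z a2 pi2 -> a1 = a2 /\ pi1 = pi2 }.

Arguments rpts {A P s}.
Arguments corr {A P s}.
Arguments rinit {A P s}.

Definition TD {A : Type} {P : pts A} {s : st P} (Z : resolution P s)
  (alpha : list A) : R :=
  fsum (Cmax (rpts Z) (rinit Z) alpha) Prc.

Definition kantorovich {X : Type} (d : X -> X -> R) (mu nu : X -> R) : R :=
  Rinf (fun v => exists w : fdist (X * X),
    (forall x, mu x = lsum (fun p => pmf w p * indic (fst p = x)) (fsupp w)) /\
    (forall y, nu y = lsum (fun p => pmf w p * indic (snd p = y)) (fsupp w)) /\
    v = lsum (fun p => pmf w p * d (fst p) (snd p)) (fsupp w)).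

Definition hausdorff {X Y : Type} (d1 : X -> Y -> R) (d2 : Y -> X -> R) : R :=
  Rmax (Rsup (fun v => exists x, v = Rinf (fun u => exists y, u = d1 x y)))
       (Rsup (fun v => exists y, v = Rinf (fun u => exists x, u = d2 y x))).

Definition dtr {A : Type} (alpha beta : list A) : R :=
  if excluded_middle_informative (alpha = beta) then 0 else 1.

Definition DT {A : Type} {P : pts A} {s t : st P}
  (Z1 : resolution P s) (Z2 : resolution P t) : R :=
  kantorovich dtr (TD Z1) (TD Z2).

Definition dT {A : Type} (P : pts A) (s t : st P) : R :=
  hausdorff (fun (Z1 : resolution P s) (Z2 : resolution P t) => DT Z1 Z2)
            (fun (Z2 : resolution P t) (Z1 : resolution P s) => DT Z2 Z1).

Inductive tform (A : Type) :=
| TTop : tform A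
| TDiam : A -> tform A -> tform A.
Arguments TTop {A}.

Fixpoint depth {A : Type} (phi : tform A) : nat :=
  match phi with TTop => 0%nat | TDiam _ phi' => S (depth phi') end.

Fixpoint csat {A S : Type} (c : steps A S) (phi : tform A) : Prop :=
  match phi, c with
  | TTop, _ => True
  | TDiam a phi', (a', _, _) :: c' => a' = a /\ csat c' phi'
  | TDiam _ _, [] => False
  end.

Record ldform (A : Type) := {
  lterms : list (R * tform A);
  lterms_nodup : NoDup (map snd lterms);
  lterms_pos : forall p, In p lterms -> 0 < fst p <= 1;
  lterms_sum : lsum fst lterms = 1 }.

Definition ldist {A : Type} (Psi : ldform A) (phi : tform A) : R :=
  lsum (fun p => fst p * indic (snd p = phi)) (lterms Psi).

Definition lsat {A : Type} (P : pts A) (s : st P) (Psi : ldform A) : Prop :=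
  exists Z : resolution P s, forall p, In p (lterms Psi) ->
    fsum (fun c => maximal (rpts Z) (rinit Z) c /\ csat c (snd p) /\
                   length c = depth (snd p)) Prc = fst p.

Definition Lset {A : Type} (P : pts A) (s : st P) : ldform A -> Prop := lsat P s.

Definition dform {A : Type} (phi1 phi2 : tform A) : R :=
  if excluded_middle_informative (phi1 = phi2) then 0 else 1.

Definition Dl {A : Type} (Psi1 Psi2 : ldform A) : R :=
  kantorovich dform (ldist Psi1) (ldist Psi2).

Definition DlSet {A : Type} (Psi : ldform A) (L : ldform A -> Prop) : R :=
  Rinf (fun v => exists Psi', L Psi' /\ v = Dl Psi Psi').

Definition sem {A : Type} (P : pts A) (Psi : ldform A) (u : st P) : R :=
  1 - DlSet Psi (Lset P u).

(* A resolution of a finite process is a finite deterministic tree, so its trace distribution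
   TD_Z is a finite probability distribution on traces, and the distribution formula
   Psi_Z = (+)_alpha TD_Z(alpha) <alpha> is satisfied by the process; conversely every formula
   satisfied by the process is Psi_Z for some resolution Z.  Both Kantorovich liftings are
   liftings of a discrete metric, hence total variation distances 1 - sum_x min(mu x, nu x), so
   D(Psi_Z1, Psi_Z2) = D_T(Z1, Z2).  Therefore inf_Z2 D_T(Z1, Z2) = D(Psi_Z1, L(t))
   = [[Psi_Z1]](s) - [[Psi_Z1]](t), which bounds each half of the Hausdorff distance by the
   supremum; conversely the triangle inequality for D gives
   [[Psi]](s) - [[Psi]](t) <= sup_Z1 inf_Z2 D_T(Z1, Z2). *)

From Stdlib Require Import Reals List Lra Lia Permutation Classical ClassicalEpsilon ClassicalDescription
  FunctionalExtensionality PropExtensionality.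
Import ListNotations.
Open Scope R_scope.
Arguments lsum {X} f l : simpl never.

Section ListSums.
Context {X : Type}.
Implicit Types (f g : X -> R) (l : list X).

Lemma lsum_nil f : lsum f [] = 0. Proof. reflexivity. Qed.

Lemma lsum_cons f x l : lsum f (x :: l) = f x + lsum f l. Proof. reflexivity. Qed.

Lemma lsum_app f l1 l2 : lsum f (l1 ++ l2) = lsum f l1 + lsum f l2.
Proof.
  induction l1 as [|x l1 IH]; simpl; [rewrite lsum_nil; lra|].
  rewrite !lsum_cons, IH; lra.
Qed.

Lemma lsum_map {Y} f (h : Y -> X) (l : list Y) :
  lsum f (map h l) = lsum (fun y => f (h y)) l.
Proof. induction l as [|y l IH]; simpl; auto. rewrite !lsum_cons, IH; auto. Qed.

Lemma lsum_ext_in f g l : (forall x, In x l -> f x = g x) -> lsum f l = lsum g l.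
Proof.
  induction l as [|y l IH]; intros H; simpl; auto.
  rewrite !lsum_cons, (H y), IH; simpl; auto.
  intros; apply H; simpl; auto.
Qed.

Lemma lsum_le_in f g l : (forall x, In x l -> f x <= g x) -> lsum f l <= lsum g l.
Proof.
  induction l as [|y l IH]; intros H; [rewrite !lsum_nil; lra|].
  rewrite !lsum_cons.
  assert (f y <= g y) by (apply H; simpl; auto).
  assert (lsum f l <= lsum g l) by (apply IH; intros; apply H; simpl; auto).
  lra.
Qed.

Lemma lsum_plus f g l : lsum (fun x => f x + g x) l = lsum f l + lsum g l.
Proof. induction l; [rewrite !lsum_nil; lra|]. rewrite !lsum_cons, IHl; lra. Qed.

Lemma lsum_minus f g l : lsum (fun x => f x - g x) l = lsum f l - lsum g l.
Proof. induction l; [rewrite !lsum_nil; lra|]. rewrite !lsum_cons, IHl; lra. Qed.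

Lemma lsum_scal_l c f l : lsum (fun x => c * f x) l = c * lsum f l.
Proof. induction l; [rewrite !lsum_nil; lra|]. rewrite !lsum_cons, IHl; lra. Qed.

Lemma lsum_scal_r c f l : lsum (fun x => f x * c) l = lsum f l * c.
Proof. induction l; [rewrite !lsum_nil; lra|]. rewrite !lsum_cons, IHl; lra. Qed.

Lemma lsum_zero l : lsum (fun _ => 0) l = 0.
Proof. induction l; auto. rewrite lsum_cons, IHl; lra. Qed.

Lemma lsum_nonneg f l : (forall x, In x l -> 0 <= f x) -> 0 <= lsum f l.
Proof. intros H. rewrite <- (lsum_zero l). apply lsum_le_in; auto. Qed.

Lemma lsum_perm f l l' : Permutation l l' -> lsum f l = lsum f l'.
Proof.
  induction 1; rewrite ?lsum_cons; try lra; congruence.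
Qed.

Lemma lsum_term_le f l x : (forall y, In y l -> 0 <= f y) -> In x l -> f x <= lsum f l.
Proof.
  intros H Hx. induction l as [|y l IH]; [destruct Hx|]. rewrite lsum_cons.
  destruct Hx as [->|Hx].
  - assert (0 <= lsum f l) by (apply lsum_nonneg; intros; apply H; simpl; auto). lra.
  - assert (0 <= f y) by (apply H; simpl; auto).
    assert (f x <= lsum f l) by (apply IH; auto; intros; apply H; simpl; auto). lra.
Qed.

Lemma lsum_eq0_nonneg f l x :
  (forall y, In y l -> 0 <= f y) -> lsum f l = 0 -> In x l -> f x = 0.
Proof.
  intros H Hs Hx. pose proof (lsum_term_le f l x H Hx). pose proof (H x Hx). lra.
Qed.

End ListSums.

Lemma lsum_swap {X Y} (f : X -> Y -> R) l1 l2 :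
  lsum (fun x => lsum (fun y => f x y) l2) l1 = lsum (fun y => lsum (fun x => f x y) l1) l2.
Proof.
  induction l1 as [|x l1 IH].
  - rewrite lsum_nil. symmetry. apply lsum_zero.
  - rewrite lsum_cons, IH, <- lsum_plus. apply lsum_ext_in. intros; rewrite lsum_cons; auto.
Qed.

Lemma lsum_prod {X Y} (f : X * Y -> R) l1 l2 :
  lsum f (list_prod l1 l2) = lsum (fun x => lsum (fun y => f (x, y)) l2) l1.
Proof.
  induction l1 as [|x l1 IH]; simpl; [rewrite !lsum_nil; auto|].
  rewrite lsum_app, lsum_map, IH, lsum_cons; auto.
Qed.

Lemma indic_true (P : Prop) : P -> indic P = 1.
Proof. intros; unfold indic; destruct excluded_middle_informative; tauto. Qed.

Lemma indic_false (P : Prop) : ~ P -> indic P = 0.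
Proof. intros; unfold indic; destruct excluded_middle_informative; tauto. Qed.

Lemma indic_bounds (P : Prop) : 0 <= indic P <= 1.
Proof. unfold indic; destruct excluded_middle_informative; lra. Qed.

Lemma mul_indic_le (P : Prop) a : 0 <= a -> a * indic P <= a.
Proof. intros Ha. pose proof (indic_bounds P). nra. Qed.

Lemma indic_iff (P Q : Prop) : (P <-> Q) -> indic P = indic Q.
Proof. intros H; unfold indic; do 2 destruct excluded_middle_informative; tauto. Qed.

Lemma indic_eq_sym {X} (x y : X) : indic (x = y) = indic (y = x).
Proof. apply indic_iff; split; auto. Qed.

Lemma lsum_indic_in {X} (f : X -> R) l y : NoDup l -> In y l ->
  lsum (fun x => f x * indic (x = y)) l = f y.
Proof.
  induction l as [|x l IH]; intros Hn Hy; [destruct Hy|]. inversion Hn; subst.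
  rewrite lsum_cons. destruct Hy as [->|Hy].
  - rewrite indic_true, (lsum_ext_in _ (fun _ => 0)), lsum_zero; auto; [lra|].
    intros x Hx. rewrite indic_false; [lra|]. intros ->; auto.
  - rewrite IH, indic_false; auto; [lra|]. intros ->; auto.
Qed.

Lemma lsum_indic_out {X} (f : X -> R) l y : ~ In y l ->
  lsum (fun x => f x * indic (x = y)) l = 0.
Proof.
  intros H. rewrite (lsum_ext_in _ (fun _ => 0)); [apply lsum_zero|].
  intros x Hx. rewrite indic_false; [lra|]. intros ->; auto.
Qed.

Lemma lsum_indic_le1 {X} l (y : X) : NoDup l -> lsum (fun x => indic (y = x)) l <= 1.
Proof.
  intros Hn. rewrite (lsum_ext_in _ (fun x => 1 * indic (x = y))).
  - destruct (classic (In y l)).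
    + rewrite lsum_indic_in; auto; lra.
    + rewrite lsum_indic_out; auto; lra.
  - intros; rewrite indic_eq_sym; ring.
Qed.

Definition asbool (Q : Prop) : bool := if excluded_middle_informative Q then true else false.

Lemma asboolE (Q : Prop) : asbool Q = true <-> Q.
Proof. unfold asbool; destruct excluded_middle_informative; split; auto; discriminate. Qed.

Definition eqdec {X} (x y : X) : {x = y} + {x <> y} := excluded_middle_informative (x = y).

Lemma lsum_filter {X} (f : X -> R) (Q : X -> Prop) l :
  lsum f (filter (fun x => asbool (Q x)) l) = lsum (fun x => f x * indic (Q x)) l.
Proof.
  induction l as [|x l IH]; simpl; [rewrite !lsum_nil; auto|].
  rewrite lsum_cons. unfold asbool at 1. destruct excluded_middle_informative.
  - rewrite lsum_cons, IH, indic_true; auto; ring.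
  - rewrite IH, indic_false; auto; ring.
Qed.

Definition listing {X} (Pr : X -> Prop) (l : list X) : Prop :=
  NoDup l /\ forall x, Pr x <-> In x l.

Lemma fsum_listing {X} (Pr : X -> Prop) (f : X -> R) l : listing Pr l -> fsum Pr f = lsum f l.
Proof.
  intros [Hn Hl]. unfold fsum. destruct excluded_middle_informative as [H|H].
  - destruct (constructive_indefinite_description _ H) as [l' [Hn' Hl']]; simpl.
    apply lsum_perm, NoDup_Permutation; auto. intros x; rewrite Hl', Hl; tauto.
  - exfalso; apply H. exists l; split; auto. intros x; rewrite Hl; tauto.
Qed.

Lemma fsum_ext {X} (P1 P2 : X -> Prop) (f : X -> R) :
  (forall x, P1 x <-> P2 x) -> fsum P1 f = fsum P2 f.
Proof.
  intros H. replace P2 with P1; auto.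
  apply functional_extensionality; intros; apply propositional_extensionality; auto.
Qed.

Record dist_on {X} (mu : X -> R) (L : list X) : Prop := {
  dist_nodup : NoDup L;
  dist_nonneg : forall x, 0 <= mu x;
  dist_out : forall x, ~ In x L -> mu x = 0;
  dist_sum : lsum mu L = 1 }.

Lemma lsum_via_support {X} (mu : X -> R) L L' : NoDup L -> (forall x, ~ In x L -> mu x = 0) ->
  lsum mu L' = lsum (fun y => mu y * lsum (fun x => indic (y = x)) L') L.
Proof.
  intros Hn H0. transitivity (lsum (fun x => lsum (fun y => mu y * indic (y = x)) L) L').
  - apply lsum_ext_in. intros x _. destruct (classic (In x L)).
    + rewrite lsum_indic_in; auto.
    + rewrite lsum_indic_out; auto.
  - rewrite lsum_swap. apply lsum_ext_in. intros; rewrite <- lsum_scal_l; auto.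
Qed.

Lemma dist_on_lsum_le1 {X} (mu : X -> R) L L' : dist_on mu L -> NoDup L' -> lsum mu L' <= 1.
Proof.
  intros [Hn Hp H0 Hs] Hn'. rewrite (lsum_via_support mu L L'), <- Hs by auto.
  apply lsum_le_in. intros y _. pose proof (lsum_indic_le1 L' y Hn').
  pose proof (Rmult_le_compat_l (mu y) _ _ (Hp y) H). lra.
Qed.

Lemma dist_on_le1 {X} (mu : X -> R) L x : dist_on mu L -> mu x <= 1.
Proof.
  intros H. pose proof (dist_on_lsum_le1 mu L [x] H) as Hx.
  rewrite lsum_cons, lsum_nil in Hx. enough (mu x + 0 <= 1) by lra.
  apply Hx. repeat constructor; auto.
Qed.

Lemma dist_on_incl {X} (mu : X -> R) L L' : dist_on mu L -> NoDup L' -> incl L L' -> dist_on mu L'.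
Proof.
  intros [Hn Hp H0 Hs] Hn' Hi. split; auto.
  rewrite (lsum_via_support mu L L'), <- Hs by auto. apply lsum_ext_in. intros y Hy.
  rewrite (lsum_ext_in _ (fun x => 1 * indic (x = y))), lsum_indic_in; auto; [ring|].
  intros; rewrite indic_eq_sym; ring.
Qed.

Lemma Rsup_is_lub (E : R -> Prop) : bound E -> (exists x, E x) -> is_lub E (Rsup E).
Proof.
  intros Hb He. unfold Rsup. destruct excluded_middle_informative as [H|H]; [|tauto].
  destruct (completeness E (proj1 H) (proj2 H)); auto.
Qed.

Lemma Rsup_ub (E : R -> Prop) x : bound E -> E x -> x <= Rsup E.
Proof. intros Hb Hx. apply (proj1 (Rsup_is_lub E Hb (ex_intro _ x Hx))); auto. Qed.

(** The nonnegativity side condition is due to [Rsup] of an empty set being [0]. *)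
Lemma Rsup_le (E : R -> Prop) M : (forall x, E x -> x <= M) -> 0 <= M -> Rsup E <= M.
Proof.
  intros H H0. unfold Rsup. destruct excluded_middle_informative as [Hb|Hb]; auto.
  destruct (completeness E (proj1 Hb) (proj2 Hb)) as [m Hm]; simpl. apply (proj2 Hm); exact H.
Qed.

Lemma Rsup_nonneg (E : R -> Prop) : (forall x, E x -> 0 <= x) -> 0 <= Rsup E.
Proof.
  intros H. unfold Rsup. destruct excluded_middle_informative as [Hb|Hb]; [|lra].
  destruct (completeness E (proj1 Hb) (proj2 Hb)) as [m Hm]; simpl.
  destruct (proj2 Hb) as [x Hx]. pose proof (H x Hx). pose proof (proj1 Hm x Hx). lra.
Qed.

Lemma Rinf_lb (E : R -> Prop) x : (forall y, E y -> 0 <= y) -> E x -> Rinf E <= x.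
Proof.
  intros H0 Hx. unfold Rinf. destruct excluded_middle_informative as [He|He]; [|exfalso; eauto].
  assert (Hb : bound (fun y => E (- y))).
  { exists 0. intros y Hy. pose proof (H0 _ Hy). lra. }
  assert (E (- - x)) by (rewrite Ropp_involutive; auto).
  pose proof (Rsup_ub (fun y => E (- y)) (- x) Hb H). lra.
Qed.

(** The bound [m <= 1] is due to [Rinf] of an empty set being [1]. *)
Lemma Rinf_glb (E : R -> Prop) m : (forall y, E y -> m <= y) -> m <= 1 -> m <= Rinf E.
Proof.
  intros H H1. unfold Rinf. destruct excluded_middle_informative as [[x Hx]|He]; auto.
  assert (Hb : bound (fun y => E (- y))).
  { exists (- m). intros y Hy. pose proof (H _ Hy). lra. }
  assert (Hx' : E (- - x)) by (rewrite Ropp_involutive; auto).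
  destruct (Rsup_is_lub _ Hb (ex_intro _ _ Hx')) as [_ Hl].
  enough (Rsup (fun y => E (- y)) <= - m) by lra.
  apply Hl. intros y Hy. pose proof (H _ Hy). lra.
Qed.

Lemma Rinf_bounds (E : R -> Prop) : (forall y, E y -> 0 <= y <= 1) -> 0 <= Rinf E <= 1.
Proof.
  intros H. split.
  - apply Rinf_glb; [intros y Hy; apply H; auto | lra].
  - destruct (classic (exists x, E x)) as [[x Hx]|Hn].
    + pose proof (Rinf_lb E x (fun y Hy => proj1 (H y Hy)) Hx). pose proof (H x Hx). lra.
    + unfold Rinf. destruct excluded_middle_informative; [tauto | lra].
Qed.

Lemma Rinf_eq (E : R -> Prop) v : E v -> (forall y, E y -> v <= y) -> 0 <= v <= 1 -> Rinf E = v.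
Proof.
  intros Hv H Hb. apply Rle_antisym.
  - apply Rinf_lb; auto. intros y Hy; pose proof (H y Hy); lra.
  - apply Rinf_glb; auto; lra.
Qed.

(** * The Kantorovich lifting of a discrete metric *)

Definition disc {X} (x y : X) : R := if excluded_middle_informative (x = y) then 0 else 1.

Lemma disc_indic {X} (x y : X) : disc x y = 1 - indic (x = y).
Proof. unfold disc, indic; destruct excluded_middle_informative; lra. Qed.

Lemma NoDup_list_prod {X Y} (L1 : list X) (L2 : list Y) :
  NoDup L1 -> NoDup L2 -> NoDup (list_prod L1 L2).
Proof.
  induction L1 as [|x L1 IH]; simpl; intros H1 H2; [constructor|]. inversion H1; subst.
  apply NoDup_app; auto.
  - apply FinFun.Injective_map_NoDup; auto. intros y1 y2 E; inversion E; auto.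
  - intros p Hp Hq. apply in_map_iff in Hp. destruct Hp as [y [<- _]].
    apply in_prod_iff in Hq. tauto.
Qed.

Section Coupling.
Context {X : Type} (mu nu : X -> R) (L : list X).
Hypotheses (Hmu : dist_on mu L) (Hnu : dist_on nu L).

Let overlap := lsum (fun x => Rmin (mu x) (nu x)) L.

Lemma overlap_bounds : 0 <= overlap <= 1.
Proof.
  split.
  - apply lsum_nonneg. intros; apply Rmin_glb; apply dist_nonneg with L; auto.
  - rewrite <- (dist_sum _ _ Hmu). apply lsum_le_in. intros; apply Rmin_l.
Qed.

Section AnyCoupling.
Variable w : fdist (X * X).
Hypothesis Hw1 : forall x, mu x = lsum (fun p => pmf w p * indic (fst p = x)) (fsupp w).
Hypothesis Hw2 : forall y, nu y = lsum (fun p => pmf w p * indic (snd p = y)) (fsupp w).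

Lemma coupling_pmf_le p : In p (fsupp w) -> pmf w p <= mu (fst p).
Proof.
  intros Hp. rewrite Hw1. replace (pmf w p) with (pmf w p * indic (fst p = fst p))
    by (rewrite indic_true; auto; ring).
  apply (lsum_term_le (fun q => pmf w q * indic (fst q = fst p))); auto.
  intros q _. apply Rmult_le_pos; [apply pmf_nonneg | apply indic_bounds].
Qed.

Lemma coupling_diagonal_le :
  lsum (fun p => pmf w p * indic (fst p = snd p)) (fsupp w) <= overlap.
Proof.
  rewrite (lsum_ext_in _ (fun p => lsum (fun x => pmf w p * indic (fst p = x) * indic (snd p = x)) L)).
  - rewrite lsum_swap. apply lsum_le_in. intros x _.
    pose proof (pmf_nonneg w) as Hw0.
    apply Rmin_glb; [rewrite Hw1 | rewrite Hw2]; apply lsum_le_in; intros p _.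
    + apply mul_indic_le, Rmult_le_pos, indic_bounds; auto.
    + rewrite Rmult_assoc, (Rmult_comm (indic _)), <- Rmult_assoc.
      apply mul_indic_le, Rmult_le_pos, indic_bounds; auto.
  - intros p Hp. destruct (classic (In (fst p) L)) as [Hin|Hout].
    + rewrite (lsum_ext_in _ (fun x => (pmf w p * indic (snd p = x)) * indic (x = fst p))).
      * rewrite lsum_indic_in by (auto; apply (dist_nodup _ _ Hmu)). rewrite indic_eq_sym; auto.
      * intros x _. rewrite (indic_eq_sym x). ring.
    + assert (Hz : pmf w p = 0).
      { pose proof (coupling_pmf_le p Hp). rewrite (dist_out _ _ Hmu _ Hout) in H.
        pose proof (pmf_nonneg w p). lra. }
      rewrite Hz, (lsum_ext_in _ (fun _ => 0)), lsum_zero; [ring|]. intros; ring.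
Qed.

Lemma coupling_cost_ge :
  1 - overlap <= lsum (fun p => pmf w p * disc (fst p) (snd p)) (fsupp w).
Proof.
  rewrite (lsum_ext_in _ (fun p => pmf w p - pmf w p * indic (fst p = snd p))).
  - rewrite lsum_minus, pmf_sum. pose proof coupling_diagonal_le. lra.
  - intros p _; rewrite disc_indic; ring.
Qed.

End AnyCoupling.

Let m x := Rmin (mu x) (nu x).
Let delta := 1 - overlap.

Lemma residual_nonneg x : 0 <= mu x - m x /\ 0 <= nu x - m x.
Proof. unfold m. pose proof (Rmin_l (mu x) (nu x)). pose proof (Rmin_r (mu x) (nu x)). lra. Qed.

Lemma residual_out x : ~ In x L -> m x = 0 /\ mu x - m x = 0 /\ nu x - m x = 0.
Proof.
  intros Hx. unfold m. rewrite (dist_out _ _ Hmu x Hx), (dist_out _ _ Hnu x Hx), Rmin_left; lra.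
Qed.

Lemma residual_sums : lsum (fun x => mu x - m x) L = delta /\ lsum (fun x => nu x - m x) L = delta.
Proof. rewrite !lsum_minus, (dist_sum _ _ Hmu), (dist_sum _ _ Hnu). unfold delta. auto. Qed.

Lemma residual_product x : (mu x - m x) * (nu x - m x) = 0.
Proof. unfold m, Rmin. destruct Rle_dec; ring. Qed.

(** When [delta = 0] all residuals vanish, so the junk value [/ 0 = 0] is harmless. *)
Lemma residual_rescale x : In x L ->
  / delta * delta * (mu x - m x) = mu x - m x /\ / delta * delta * (nu x - m x) = nu x - m x.
Proof.
  intros Hx. destruct (Req_dec delta 0) as [E|E].
  - destruct residual_sums as [Sm Sn]. rewrite E in Sm, Sn.
    rewrite (lsum_eq0_nonneg _ _ x (fun y _ => proj1 (residual_nonneg y)) Sm Hx).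
    rewrite (lsum_eq0_nonneg _ _ x (fun y _ => proj2 (residual_nonneg y)) Sn Hx).
    split; ring.
  - rewrite Rinv_l by auto. split; ring.
Qed.

(** The optimal coupling: keep the overlap [m] on the diagonal and couple the residuals independently. *)
Definition tv_pmf (p : X * X) : R :=
  m (fst p) * indic (fst p = snd p) + / delta * (mu (fst p) - m (fst p)) * (nu (snd p) - m (snd p)).

Lemma tv_pmf_nonneg p : 0 <= tv_pmf p.
Proof.
  unfold tv_pmf. destruct (residual_nonneg (fst p)), (residual_nonneg (snd p)).
  assert (0 <= m (fst p)) by (apply Rmin_glb; apply dist_nonneg with L; auto).
  assert (0 <= / delta).
  { pose proof overlap_bounds. destruct (Req_dec delta 0) as [->|E].
    - rewrite Rinv_0; lra.
    - apply Rlt_le, Rinv_0_lt_compat. unfold delta in *; lra. }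
  pose proof (indic_bounds (fst p = snd p)).
  apply Rplus_le_le_0_compat; repeat apply Rmult_le_pos; auto; lra.
Qed.

Lemma tv_pmf_out p : ~ In p (list_prod L L) -> tv_pmf p = 0.
Proof.
  destruct p as [x y]. rewrite in_prod_iff. intros Hp. unfold tv_pmf; simpl.
  destruct (classic (In x L)) as [Hx|Hx].
  - assert (Hy : ~ In y L) by tauto. destruct (residual_out y Hy) as (_ & _ & ->).
    rewrite indic_false by (intros ->; auto). ring.
  - destruct (residual_out x Hx) as (-> & -> & _). ring.
Qed.

Lemma tv_pmf_row x : In x L -> lsum (fun y => tv_pmf (x, y)) L = mu x.
Proof.
  intros Hx. unfold tv_pmf; simpl. rewrite lsum_plus.
  rewrite (lsum_ext_in (fun y => m x * indic (x = y)) (fun y => m x * indic (y = x)))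
    by (intros; rewrite indic_eq_sym; auto).
  rewrite lsum_indic_in, lsum_scal_l by (auto; apply (dist_nodup _ _ Hmu)).
  rewrite (proj2 residual_sums). destruct (residual_rescale x Hx) as [E _]. lra.
Qed.

Lemma tv_pmf_col y : In y L -> lsum (fun x => tv_pmf (x, y)) L = nu y.
Proof.
  intros Hy. unfold tv_pmf; simpl. rewrite lsum_plus, lsum_scal_r, lsum_scal_l.
  rewrite lsum_indic_in by (auto; apply (dist_nodup _ _ Hmu)).
  rewrite (proj1 residual_sums). destruct (residual_rescale y Hy) as [_ E]. lra.
Qed.

Lemma tv_pmf_sum : lsum tv_pmf (list_prod L L) = 1.
Proof.
  rewrite lsum_prod, <- (dist_sum _ _ Hmu). apply lsum_ext_in. apply tv_pmf_row.
Qed.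

Definition tv_coupling : fdist (X * X) := {|
  pmf := tv_pmf;
  fsupp := list_prod L L;
  pmf_nonneg := tv_pmf_nonneg;
  fsupp_nodup := NoDup_list_prod _ _ (dist_nodup _ _ Hmu) (dist_nodup _ _ Hmu);
  fsupp_spec := fun p Hp => NNPP _ (fun Hn => Hp (tv_pmf_out p Hn));
  pmf_sum := tv_pmf_sum |}.

Lemma tv_coupling_fst x :
  mu x = lsum (fun p => pmf tv_coupling p * indic (fst p = x)) (fsupp tv_coupling).
Proof.
  simpl. rewrite lsum_prod.
  rewrite (lsum_ext_in _ (fun x' => mu x' * indic (x' = x))).
  - destruct (classic (In x L)).
    + rewrite lsum_indic_in; auto. apply (dist_nodup _ _ Hmu).
    + rewrite lsum_indic_out, (dist_out _ _ Hmu); auto.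
  - intros x' Hx'. simpl. rewrite lsum_scal_r, tv_pmf_row; auto.
Qed.

Lemma tv_coupling_snd y :
  nu y = lsum (fun p => pmf tv_coupling p * indic (snd p = y)) (fsupp tv_coupling).
Proof.
  simpl. rewrite lsum_prod, lsum_swap.
  rewrite (lsum_ext_in _ (fun y' => nu y' * indic (y' = y))).
  - destruct (classic (In y L)).
    + rewrite lsum_indic_in; auto. apply (dist_nodup _ _ Hmu).
    + rewrite lsum_indic_out, (dist_out _ _ Hnu); auto.
  - intros y' Hy'. simpl. rewrite lsum_scal_r, tv_pmf_col; auto.
Qed.

Lemma tv_coupling_cost :
  lsum (fun p => pmf tv_coupling p * disc (fst p) (snd p)) (fsupp tv_coupling) = 1 - overlap.
Proof.
  simpl. rewrite lsum_prod. fold delta. rewrite <- (proj1 residual_sums).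
  apply lsum_ext_in. intros x Hx. simpl.
  rewrite (lsum_ext_in _ (fun y => tv_pmf (x, y) - tv_pmf (x, y) * indic (y = x)))
    by (intros; rewrite disc_indic, (indic_eq_sym x); ring).
  rewrite lsum_minus, tv_pmf_row, lsum_indic_in by (auto; apply (dist_nodup _ _ Hmu)).
  unfold tv_pmf; simpl. rewrite indic_true by auto.
  rewrite Rmult_assoc, residual_product. ring.
Qed.

Lemma kantorovich_disc : kantorovich disc mu nu = 1 - overlap.
Proof.
  pose proof overlap_bounds. apply Rinf_eq; [|intros v (w & Hw1 & Hw2 & ->) | lra].
  - exists tv_coupling. split; [|split].
    + apply tv_coupling_fst.
    + apply tv_coupling_snd.
    + symmetry; apply tv_coupling_cost.
  - apply coupling_cost_ge; auto.
Qed.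

End Coupling.

Lemma kantorovich_disc_bounds {X} (mu nu : X -> R) L :
  dist_on mu L -> dist_on nu L -> 0 <= kantorovich disc mu nu <= 1.
Proof.
  intros Hmu Hnu. rewrite (kantorovich_disc mu nu L) by auto.
  pose proof (overlap_bounds mu nu L Hmu Hnu). lra.
Qed.

Lemma kantorovich_disc_refl {X} (mu : X -> R) L : dist_on mu L -> kantorovich disc mu mu = 0.
Proof.
  intros Hmu. rewrite (kantorovich_disc mu mu L), (lsum_ext_in _ mu), (dist_sum _ _ Hmu); auto.
  - lra.
  - intros; apply Rmin_left; lra.
Qed.

Lemma kantorovich_disc_triangle {X} (mu nu rho : X -> R) L :
  dist_on mu L -> dist_on nu L -> dist_on rho L ->
  kantorovich disc mu rho <= kantorovich disc mu nu + kantorovich disc nu rho.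
Proof.
  intros Hmu Hnu Hrho. rewrite !(kantorovich_disc _ _ L) by auto.
  enough (lsum (fun x => Rmin (mu x) (nu x)) L + lsum (fun x => Rmin (nu x) (rho x)) L
          <= lsum nu L + lsum (fun x => Rmin (mu x) (rho x)) L)
    by (rewrite (dist_sum _ _ Hnu) in *; lra).
  rewrite <- !lsum_plus. apply lsum_le_in. intros x _. unfold Rmin. repeat destruct Rle_dec; lra.
Qed.

(** * Maximal computations of resolutions *)

Lemma Prc_nonneg {A S} (c : steps A S) : 0 <= Prc c.
Proof.
  induction c as [|[[a pi] z] c IH]; simpl; [lra|].
  apply Rmult_le_pos; auto. apply pmf_nonneg.
Qed.

Lemma fdist_has_pos {X} (pi : fdist X) : exists x, 0 < pmf pi x.
Proof.
  apply NNPP. intros H.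
  assert (lsum (pmf pi) (fsupp pi) <= lsum (fun _ => 0) (fsupp pi)).
  { apply lsum_le_in. intros x _. apply Rnot_lt_le. intro; apply H; eauto. }
  rewrite lsum_zero, pmf_sum in H0. lra.
Qed.

Definition deterministic {A} (Q : pts A) : Prop := forall z a1 pi1 a2 pi2,
  trans Q z a1 pi1 -> trans Q z a2 pi2 -> a1 = a2 /\ pi1 = pi2.

Definition stuck {A} (Q : pts A) (z : st Q) : Prop := ~ exists a pi, trans Q z a pi.

Lemma maximal_stuck {A} (Q : pts A) z c : stuck Q z -> (maximal Q z c <-> c = []).
Proof.
  intros H. split.
  - intros [Hv _]. destruct c as [|[[a pi] z'] c]; auto.
    exfalso. apply H. destruct Hv; eauto.
  - intros ->. split; [simpl; auto|]. intros [ext [Hne Hv]].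
    destruct ext as [|[[a pi] z'] e]; [tauto|]. apply H. destruct Hv; eauto.
Qed.

Lemma maximal_step {A} (Q : pts A) z a pi c : deterministic Q -> trans Q z a pi ->
  (maximal Q z c <-> exists z' c', c = (a, pi, z') :: c' /\ 0 < pmf pi z' /\ maximal Q z' c').
Proof.
  intros Hd Ht. split.
  - intros [Hv Hm]. destruct c as [|[[a1 pi1] z1] c].
    + exfalso. apply Hm. destruct (fdist_has_pos pi) as [z' Hz'].
      exists [(a, pi, z')]. split; [discriminate | simpl; auto].
    + destruct Hv as (Ht1 & Hp1 & Hv1). destruct (Hd _ _ _ _ _ Ht Ht1) as [<- <-].
      exists z1, c. repeat split; auto.
      intros [ext [Hne Hv]]. apply Hm. exists ext. split; simpl; auto.
  - intros (z' & c' & -> & Hp & Hv & Hm). split; [simpl; auto|].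
    intros [ext [Hne Hve]]. apply Hm. exists ext. simpl in Hve. tauto.
Qed.

Lemma stuck_maximal_listing {A} (Q : pts A) z : stuck Q z ->
  exists Cs, listing (maximal Q z) Cs /\ lsum Prc Cs = 1.
Proof.
  intros Hs. exists [[]]. split; [split|].
  - repeat constructor; auto.
  - intros c. rewrite maximal_stuck by auto. simpl. intuition.
  - rewrite lsum_cons, lsum_nil. simpl. ring.
Qed.

Lemma listing_step_extensions {A} (Q : pts A) a (pi : fdist (st Q)) (Lz : list (st Q)) :
  NoDup Lz ->
  (forall z', In z' Lz -> exists Cs, listing (maximal Q z') Cs /\ lsum Prc Cs = 1) ->
  exists Cs, listing (fun c => exists z' c', In z' Lz /\ c = (a, pi, z') :: c' /\ maximal Q z' c') Cs
             /\ lsum Prc Cs = lsum (pmf pi) Lz.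
Proof.
  induction Lz as [|z0 Lz IH]; intros Hn H.
  - exists []. split; [split|]; [constructor | | reflexivity].
    intros c; split; [intros (z' & c' & [] & _) | intros []].
  - inversion Hn; subst.
    destruct (H z0 (or_introl eq_refl)) as [Cs0 [[N0 M0] S0]].
    destruct IH as [Cs1 [[N1 M1] S1]]; auto. { intros; apply H; simpl; auto. }
    exists (map (cons (a, pi, z0)) Cs0 ++ Cs1). split; [split|].
    + apply NoDup_app; auto.
      * apply FinFun.Injective_map_NoDup; auto. intros x y E; inversion E; auto.
      * intros c Hc Hc1. apply in_map_iff in Hc. destruct Hc as [c0 [<- _]].
        apply M1 in Hc1. destruct Hc1 as (z' & c' & Hz' & E & _). inversion E; subst. auto.
    + intros c. rewrite in_app_iff, in_map_iff, <- M1. split.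
      * intros (z' & c' & [<-|Hz'] & -> & Hm); [left | right].
        -- exists c'. split; auto. apply M0; auto.
        -- exists z', c'. auto.
      * intros [[c0 [<- Hc0]] | (z' & c' & Hz' & -> & Hm)].
        -- exists z0, c0. split; simpl; auto. split; auto. apply M0; auto.
        -- exists z', c'. simpl; auto.
    + rewrite lsum_app, lsum_map, lsum_cons, S1.
      change (fun c => Prc ((a, pi, z0) :: c)) with (fun c : steps A (st Q) => pmf pi z0 * Prc c).
      unfold steps in S0. rewrite lsum_scal_l, S0. ring.
Qed.

Lemma maximal_listing_bounded {A} (Q : pts A) : deterministic Q -> forall n z,
  (forall c, valid Q z c -> (length c <= n)%nat) ->
  exists Cs, listing (maximal Q z) Cs /\ lsum Prc Cs = 1.
Proof.
  intros Hd n. induction n as [|n IH]; intros z Hb;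
    (destruct (classic (stuck Q z)) as [Hs|Hs]; [exact (stuck_maximal_listing Q z Hs)|];
     apply NNPP in Hs; destruct Hs as [a [pi Ht]]).
  - exfalso. destruct (fdist_has_pos pi) as [z' Hz'].
    assert (Hv : valid Q z [(a, pi, z')]) by (simpl; auto). apply Hb in Hv. simpl in Hv. lia.
  - set (Lz := filter (fun z' => asbool (0 < pmf pi z')) (fsupp pi)).
    assert (HLz : forall z', In z' Lz <-> 0 < pmf pi z').
    { intros z'. unfold Lz. rewrite filter_In, asboolE. split; [tauto|].
      split; auto. apply fsupp_spec. lra. }
    destruct (listing_step_extensions Q a pi Lz) as [Cs [[N M] S]].
    + apply NoDup_filter, fsupp_nodup.
    + intros z' Hz'. apply IH. intros c Hc. apply HLz in Hz'.
      assert (Hv : valid Q z ((a, pi, z') :: c)) by (simpl; tauto). apply Hb in Hv. simpl in Hv. lia.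
    + exists Cs. split; [split; auto|].
      * intros c. rewrite <- M, (maximal_step Q z a pi c Hd Ht).
        setoid_rewrite HLz. firstorder.
      * rewrite S. unfold Lz. rewrite lsum_filter, <- (pmf_sum pi). apply lsum_ext_in.
        intros x _. destruct (classic (0 < pmf pi x)).
        -- rewrite indic_true; auto; ring.
        -- rewrite indic_false by auto. pose proof (pmf_nonneg pi x). replace (pmf pi x) with 0; lra.
Qed.

Section Resolutions.
Context {A : Type} (P : pts A) (u : st P).

Lemma resolution_valid_project (Z : resolution P u) c z : valid (rpts Z) z c ->
  exists c', valid P (corr Z z) c' /\ length c' = length c.
Proof.
  revert z. induction c as [|[[a pi] z'] c IH]; intros z Hv; [exists []; simpl; auto|].
  destruct Hv as (Ht & Hp & Hv). destruct (r_match Z _ _ _ Ht) as [pi' [Ht' Hpi]].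
  destruct (IH z' Hv) as [c' [Hv' Hl]]. exists ((a, pi', corr Z z') :: c').
  simpl. rewrite <- Hpi. auto.
Qed.

Lemma resolution_maximal_listing (Z : resolution P u) : finite_proc P u ->
  exists Cs, listing (maximal (rpts Z) (rinit Z)) Cs /\ lsum Prc Cs = 1.
Proof.
  intros [N HN]. apply (maximal_listing_bounded (rpts Z) (r_det Z) N). intros c Hc.
  destruct (resolution_valid_project Z c _ Hc) as [c' [Hv Hl]].
  rewrite r_corr_init in Hv. rewrite <- Hl; auto.
Qed.

Section TraceDistribution.
Variables (Z : resolution P u) (Cs : list (steps A (st (rpts Z)))).
Hypothesis HCs : listing (maximal (rpts Z) (rinit Z)) Cs.

Lemma TD_lsum alpha : TD Z alpha = lsum (fun c => Prc c * indic (trace c = alpha)) Cs.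
Proof.
  destruct HCs as [Hn Hm]. unfold TD.
  rewrite (fsum_listing _ _ (filter (fun c => asbool (trace c = alpha)) Cs)), lsum_filter; auto.
  split; [apply NoDup_filter; auto|].
  intros c. rewrite filter_In, asboolE. unfold Cmax. rewrite Hm. tauto.
Qed.

Definition listed_traces : list (list A) :=
  nodup eqdec (map trace Cs).

Lemma TD_dist : lsum Prc Cs = 1 -> dist_on (TD Z) listed_traces.
Proof.
  intros Hs. split.
  - apply NoDup_nodup.
  - intros x; rewrite TD_lsum. apply lsum_nonneg. intros c _.
    apply Rmult_le_pos; [apply Prc_nonneg | apply indic_bounds].
  - intros x Hx. rewrite TD_lsum, (lsum_ext_in _ (fun _ => 0)); [apply lsum_zero|].
    intros c Hc. rewrite indic_false; [ring|]. intros E. apply Hx, nodup_In.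
    rewrite <- E. apply in_map; auto.
  - rewrite (lsum_ext_in _ (fun x => lsum (fun c => Prc c * indic (trace c = x)) Cs))
      by (intros; apply TD_lsum).
    rewrite lsum_swap, <- Hs. apply lsum_ext_in. intros c Hc.
    rewrite lsum_scal_l, (lsum_ext_in _ (fun x => 1 * indic (x = trace c))).
    + rewrite lsum_indic_in; [ring | apply NoDup_nodup | apply nodup_In, in_map; auto].
    + intros; rewrite indic_eq_sym; ring.
Qed.

End TraceDistribution.

Lemma resolution_TD_dist (Z : resolution P u) : finite_proc P u -> exists T, dist_on (TD Z) T.
Proof.
  intros Fu. destruct (resolution_maximal_listing Z Fu) as [Cs [HCs Hs]].
  exists (listed_traces Z Cs). apply TD_dist; auto.
Qed.

End Resolutions.

(** * Trace formulae *)

Fixpoint ftrace {A} (phi : tform A) : list A :=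
  match phi with TTop => [] | TDiam a phi' => a :: ftrace phi' end.

Fixpoint tformula {A} (l : list A) : tform A :=
  match l with [] => TTop | a :: l' => TDiam a (tformula l') end.

Lemma ftrace_tformula {A} (l : list A) : ftrace (tformula l) = l.
Proof. induction l; simpl; congruence. Qed.

Lemma tformula_ftrace {A} (phi : tform A) : tformula (ftrace phi) = phi.
Proof. induction phi; simpl; congruence. Qed.

Lemma tformula_inj {A} : FinFun.Injective (@tformula A).
Proof. intros x y E. rewrite <- (ftrace_tformula x), <- (ftrace_tformula y), E; auto. Qed.

Lemma ftrace_inj {A} : FinFun.Injective (@ftrace A).
Proof. intros x y E. rewrite <- (tformula_ftrace x), <- (tformula_ftrace y), E; auto. Qed.

Lemma csat_depth_iff_trace {A S} (c : steps A S) phi :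
  csat c phi /\ length c = depth phi <-> trace c = ftrace phi.
Proof.
  revert c. induction phi as [|a phi IH]; intros [|[[a' pi] z] c]; simpl;
    try (split; [intros [_ ?] | intros ?]; discriminate || tauto).
  split.
  - intros [[-> Hc] Hl]. f_equal. apply IH. auto.
  - intros E. injection E as Ea Et. apply IH in Et. destruct Et. auto.
Qed.

Lemma lsum_terms_in {A} (l : list (R * tform A)) r phi : NoDup (map snd l) -> In (r, phi) l ->
  lsum (fun p => fst p * indic (snd p = phi)) l = r.
Proof.
  induction l as [|[r0 phi0] l IH]; simpl; intros Hn Hin; [destruct Hin|]. inversion Hn; subst.
  rewrite lsum_cons. simpl. destruct Hin as [E|Hin].
  - inversion E; subst. rewrite indic_true, (lsum_ext_in _ (fun _ => 0)), lsum_zero; auto; [ring|].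
    intros p Hp. rewrite indic_false; [ring|]. intros <-. apply H1, in_map; auto.
  - rewrite IH, indic_false; auto; [ring|]. intros ->. apply H1.
    change phi with (snd (r, phi)). apply in_map; auto.
Qed.

Lemma lsum_terms_out {A} (l : list (R * tform A)) phi : ~ In phi (map snd l) ->
  lsum (fun p => fst p * indic (snd p = phi)) l = 0.
Proof.
  intros H. rewrite (lsum_ext_in _ (fun _ => 0)); [apply lsum_zero|].
  intros p Hp. rewrite indic_false; [ring|]. intros <-. apply H, in_map; auto.
Qed.

Lemma ldist_dist {A} (Psi : ldform A) : dist_on (ldist Psi) (map snd (lterms Psi)).
Proof.
  split; [apply lterms_nodup | | apply lsum_terms_out |].
  - intros x. apply lsum_nonneg. intros p Hp. pose proof (lterms_pos Psi p Hp).
    apply Rmult_le_pos; [lra | apply indic_bounds].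
  - rewrite lsum_map, <- (lterms_sum Psi). apply lsum_ext_in. intros [r phi] Hp.
    apply lsum_terms_in; auto. apply lterms_nodup.
Qed.

Lemma dist_on_ftrace {A} (mu : list A -> R) T :
  dist_on mu T -> dist_on (fun phi => mu (ftrace phi)) (map tformula T).
Proof.
  intros [Hn Hp H0 Hs]. split; auto.
  - apply FinFun.Injective_map_NoDup; auto. apply tformula_inj.
  - intros phi Hphi. apply H0. intros Hin. apply Hphi. rewrite <- (tformula_ftrace phi).
    apply in_map; auto.
  - rewrite lsum_map, <- Hs. apply lsum_ext_in. intros; rewrite ftrace_tformula; auto.
Qed.

Lemma dist_on_widen {X} (mu : X -> R) L L' : dist_on mu L -> incl L L' -> dist_on mu (nodup eqdec L').
Proof.
  intros H Hi. apply (dist_on_incl _ _ _ H (NoDup_nodup _ _)). intros x Hx. apply nodup_In; auto.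
Qed.

Lemma Dl_bounds {A} (Psi1 Psi2 : ldform A) : 0 <= Dl Psi1 Psi2 <= 1.
Proof.
  apply (kantorovich_disc_bounds _ _ (nodup eqdec (map snd (lterms Psi1) ++ map snd (lterms Psi2))));
    apply (dist_on_widen _ _ _ (ldist_dist _)); intros x Hx; apply in_app_iff; auto.
Qed.

Lemma Dl_refl {A} (Psi : ldform A) : Dl Psi Psi = 0.
Proof. apply (kantorovich_disc_refl _ _ (ldist_dist Psi)). Qed.

Lemma Dl_triangle {A} (Psi1 Psi2 Psi3 : ldform A) : Dl Psi1 Psi3 <= Dl Psi1 Psi2 + Dl Psi2 Psi3.
Proof.
  apply (kantorovich_disc_triangle _ _ _
    (nodup eqdec (map snd (lterms Psi1) ++ map snd (lterms Psi2) ++ map snd (lterms Psi3))));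
    apply (dist_on_widen _ _ _ (ldist_dist _)); intros x Hx; rewrite !in_app_iff; auto.
Qed.

Section FormulaOfDist.
Context {A : Type} (mu : list A -> R) (T : list (list A)).
Hypothesis Hmu : dist_on mu T.

Definition support_terms : list (R * tform A) :=
  map (fun a => (mu a, tformula a)) (filter (fun a => asbool (0 < mu a)) T).

Lemma support_terms_nodup : NoDup (map snd support_terms).
Proof.
  unfold support_terms. rewrite map_map. apply FinFun.Injective_map_NoDup.
  - apply tformula_inj.
  - apply NoDup_filter, (dist_nodup _ _ Hmu).
Qed.

Lemma support_terms_pos p : In p support_terms -> 0 < fst p <= 1.
Proof.
  unfold support_terms. rewrite in_map_iff. intros [a [<- Ha]].
  rewrite filter_In, asboolE in Ha. simpl. split; [tauto | apply (dist_on_le1 _ _ _ Hmu)].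
Qed.

Lemma support_terms_sum : lsum fst support_terms = 1.
Proof.
  unfold support_terms. rewrite lsum_map, lsum_filter, <- (dist_sum _ _ Hmu).
  apply lsum_ext_in. intros a _. simpl. destruct (classic (0 < mu a)).
  - rewrite indic_true; auto; ring.
  - rewrite indic_false by auto. pose proof (dist_nonneg _ _ Hmu a).
    replace (mu a) with 0; lra.
Qed.

Definition ldform_of_dist : ldform A := {|
  lterms := support_terms;
  lterms_nodup := support_terms_nodup;
  lterms_pos := support_terms_pos;
  lterms_sum := support_terms_sum |}.

Lemma ldist_ldform_of_dist phi : ldist ldform_of_dist phi = mu (ftrace phi).
Proof.
  unfold ldist. simpl. unfold support_terms. rewrite lsum_map. simpl.
  rewrite (lsum_ext_in _ (fun a => mu a * indic (a = ftrace phi))).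
  2:{ intros a _. f_equal. apply indic_iff. split; intros E.
      - rewrite <- E, ftrace_tformula; auto.
      - rewrite E, tformula_ftrace; auto. }
  destruct (classic (In (ftrace phi) (filter (fun a => asbool (0 < mu a)) T))) as [Hin|Hout].
  - apply lsum_indic_in; auto. apply NoDup_filter, (dist_nodup _ _ Hmu).
  - rewrite lsum_indic_out by auto. symmetry.
    rewrite filter_In, asboolE in Hout. destruct (classic (In (ftrace phi) T)).
    + pose proof (dist_nonneg _ _ Hmu (ftrace phi)).
      assert (~ 0 < mu (ftrace phi)) by tauto. lra.
    + apply (dist_out _ _ Hmu); auto.
Qed.

End FormulaOfDist.

Definition represents {A} {P : pts A} {u : st P} (Z : resolution P u) (Psi : ldform A) : Prop :=
  forall phi, ldist Psi phi = TD Z (ftrace phi).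

Lemma represents_lsat {A} (P : pts A) u (Z : resolution P u) : finite_proc P u ->
  exists Psi, represents Z Psi /\ Lset P u Psi.
Proof.
  intros Fu. destruct (resolution_TD_dist P u Z Fu) as [T HT].
  exists (ldform_of_dist (TD Z) T HT). split.
  - intros phi. apply ldist_ldform_of_dist.
  - exists Z. intros p Hp. simpl in Hp. unfold support_terms in Hp.
    apply in_map_iff in Hp. destruct Hp as [a [<- Ha]]. simpl.
    unfold TD. apply fsum_ext. intros c. unfold Cmax.
    rewrite csat_depth_iff_trace, ftrace_tformula. tauto.
Qed.

Lemma lsat_represented {A} (P : pts A) u (Psi : ldform A) : finite_proc P u -> Lset P u Psi ->
  exists Z : resolution P u, represents Z Psi.
Proof.
  intros Fu [Z HZ]. exists Z. destruct (resolution_TD_dist P u Z Fu) as [T HT].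
  assert (Hterm : forall p, In p (lterms Psi) -> TD Z (ftrace (snd p)) = fst p).
  { intros p Hp. rewrite <- (HZ p Hp). unfold TD. apply fsum_ext. intros c. unfold Cmax.
    rewrite csat_depth_iff_trace. tauto. }
  intros phi. unfold ldist. destruct (classic (In phi (map snd (lterms Psi)))) as [Hi|Ho].
  - apply in_map_iff in Hi. destruct Hi as [[r phi0] [E Hp]]. simpl in E; subst phi0.
    rewrite (lsum_terms_in _ r) by (auto; apply lterms_nodup).
    symmetry. apply (Hterm _ Hp).
  - (* [TD Z] already has mass 1 on the traces of the terms of [Psi], so none is left for [phi] *)
    rewrite lsum_terms_out by auto.
    set (L' := ftrace phi :: map (fun p => ftrace (snd p)) (lterms Psi)).
    assert (NL : NoDup L').
    { constructor.
      - rewrite in_map_iff. intros [p [E Hp]]. apply ftrace_inj in E.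
        apply Ho. rewrite <- E. apply in_map; auto.
      - rewrite <- (map_map snd ftrace). apply FinFun.Injective_map_NoDup.
        + apply ftrace_inj.
        + apply lterms_nodup. }
    pose proof (dist_on_lsum_le1 _ _ L' HT NL) as Hle.
    unfold L' in Hle. rewrite lsum_cons, lsum_map, (lsum_ext_in _ fst), lterms_sum in Hle by auto.
    pose proof (dist_nonneg _ _ HT (ftrace phi)). lra.
Qed.

Lemma Dl_eq_DT {A} (P : pts A) u v (Z1 : resolution P u) (Z2 : resolution P v) Psi1 Psi2 :
  finite_proc P u -> finite_proc P v -> represents Z1 Psi1 -> represents Z2 Psi2 ->
  Dl Psi1 Psi2 = DT Z1 Z2.
Proof.
  intros Fu Fv R1 R2.
  destruct (resolution_TD_dist P u Z1 Fu) as [T1 H1].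
  destruct (resolution_TD_dist P v Z2 Fv) as [T2 H2].
  set (T := nodup eqdec (T1 ++ T2)).
  assert (G1 : dist_on (TD Z1) T) by (apply (dist_on_widen _ _ _ H1); intros x Hx; apply in_app_iff; auto).
  assert (G2 : dist_on (TD Z2) T) by (apply (dist_on_widen _ _ _ H2); intros x Hx; apply in_app_iff; auto).
  unfold Dl, DT.
  replace (ldist Psi1) with (fun phi => TD Z1 (ftrace phi)) by (apply functional_extensionality; auto).
  replace (ldist Psi2) with (fun phi => TD Z2 (ftrace phi)) by (apply functional_extensionality; auto).
  change (@dtr A) with (@disc (list A)). change (@dform A) with (@disc (tform A)).
  rewrite (kantorovich_disc _ _ T), (kantorovich_disc _ _ (map tformula T)), lsum_map
    by (try apply dist_on_ftrace; auto).
  f_equal. apply lsum_ext_in. intros; rewrite ftrace_tformula; auto.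
Qed.

(** * The strong trace metric *)

Section TraceMetric.
Context {A : Type} (P : pts A).

Lemma DT_bounds u v (Z1 : resolution P u) (Z2 : resolution P v) :
  finite_proc P u -> finite_proc P v -> 0 <= DT Z1 Z2 <= 1.
Proof.
  intros Fu Fv.
  destruct (represents_lsat P u Z1 Fu) as [Psi1 [R1 _]].
  destruct (represents_lsat P v Z2 Fv) as [Psi2 [R2 _]].
  rewrite <- (Dl_eq_DT P u v Z1 Z2 Psi1 Psi2) by auto. apply Dl_bounds.
Qed.

Lemma DlSet_le u Psi Psi' : Lset P u Psi' -> DlSet Psi (Lset P u) <= Dl Psi Psi'.
Proof.
  intros H. apply Rinf_lb; [intros y [Q [_ ->]]; apply Dl_bounds | exists Psi'; auto].
Qed.

Lemma DlSet_bounds u Psi : 0 <= DlSet Psi (Lset P u) <= 1.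
Proof. apply Rinf_bounds. intros y [Q [_ ->]]. apply Dl_bounds. Qed.

Lemma DlSet_glb u Psi m :
  (forall Psi', Lset P u Psi' -> m <= Dl Psi Psi') -> m <= 1 -> m <= DlSet Psi (Lset P u).
Proof. intros H H1. apply Rinf_glb; auto. intros y [Q [HQ ->]]. auto. Qed.

Lemma DlSet_self u Psi : Lset P u Psi -> DlSet Psi (Lset P u) = 0.
Proof.
  intros H. pose proof (DlSet_le u Psi Psi H). pose proof (DlSet_bounds u Psi).
  rewrite Dl_refl in *. lra.
Qed.

Lemma sem_bounds u Psi : 0 <= sem P Psi u <= 1.
Proof. unfold sem. pose proof (DlSet_bounds u Psi). lra. Qed.

Lemma inf_DT_eq_DlSet u v (Z1 : resolution P u) Psi1 :
  finite_proc P u -> finite_proc P v -> represents Z1 Psi1 ->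
  Rinf (fun x => exists Z2 : resolution P v, x = DT Z1 Z2) = DlSet Psi1 (Lset P v).
Proof.
  intros Fu Fv R1. apply Rle_antisym.
  - apply DlSet_glb.
    + intros Psi2 HL. destruct (lsat_represented P v Psi2 Fv HL) as [Z2 R2].
      rewrite (Dl_eq_DT P u v Z1 Z2 Psi1 Psi2) by auto.
      apply Rinf_lb; [intros y [Z ->]; apply DT_bounds; auto | exists Z2; auto].
    + apply Rinf_bounds. intros y [Z2 ->]. apply DT_bounds; auto.
  - apply Rinf_glb; [|apply DlSet_bounds]. intros y [Z2 ->].
    destruct (represents_lsat P v Z2 Fv) as [Psi2 [R2 L2]].
    rewrite <- (Dl_eq_DT P u v Z1 Z2 Psi1 Psi2) by auto. apply DlSet_le; auto.
Qed.

(** One half of the Hausdorff lifting defining [dT]. *)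
Definition dT_half u v : R :=
  Rsup (fun x => exists Z1 : resolution P u, x = Rinf (fun y => exists Z2 : resolution P v, y = DT Z1 Z2)).

Lemma dT_half_nonneg u v : finite_proc P u -> finite_proc P v -> 0 <= dT_half u v.
Proof.
  intros Fu Fv. apply Rsup_nonneg. intros x [Z1 ->].
  apply Rinf_bounds. intros y [Z2 ->]. apply DT_bounds; auto.
Qed.

Lemma inf_DT_le_dT_half u v (Z1 : resolution P u) : finite_proc P u -> finite_proc P v ->
  Rinf (fun y => exists Z2 : resolution P v, y = DT Z1 Z2) <= dT_half u v.
Proof.
  intros Fu Fv. apply Rsup_ub; [|exists Z1; auto].
  exists 1. intros x [Z ->]. apply Rinf_bounds. intros y [Z2 ->]. apply DT_bounds; auto.
Qed.

Lemma dT_half_le u v M : finite_proc P u -> finite_proc P v ->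
  (forall Psi, Rabs (sem P Psi u - sem P Psi v) <= M) -> 0 <= M -> dT_half u v <= M.
Proof.
  intros Fu Fv HM HM0. apply Rsup_le; auto. intros x [Z1 ->].
  destruct (represents_lsat P u Z1 Fu) as [Psi1 [R1 L1]].
  rewrite (inf_DT_eq_DlSet u v Z1 Psi1) by auto.
  (* [Psi1] is satisfied by [u], so [sem P Psi1 u = 1] *)
  specialize (HM Psi1). unfold sem in HM. rewrite (DlSet_self u Psi1 L1) in HM.
  pose proof (DlSet_bounds v Psi1). rewrite Rabs_pos_eq in HM; lra.
Qed.

Lemma sem_sub_le_dT_half u v Psi : finite_proc P u -> finite_proc P v ->
  sem P Psi u - sem P Psi v <= dT_half u v.
Proof.
  intros Fu Fv. unfold sem.
  enough (DlSet Psi (Lset P v) - dT_half u v <= DlSet Psi (Lset P u)) by lra.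
  pose proof (DlSet_bounds v Psi).
  pose proof (dT_half_nonneg u v Fu Fv).
  apply DlSet_glb; [|lra]. intros Psi' HL. destruct (lsat_represented P u Psi' Fu HL) as [Z1 R1].
  pose proof (inf_DT_le_dT_half u v Z1 Fu Fv) as I1.
  rewrite (inf_DT_eq_DlSet u v Z1 Psi') in I1 by auto.
  enough (DlSet Psi (Lset P v) - Dl Psi Psi' <= DlSet Psi' (Lset P v)) by lra.
  apply DlSet_glb.
  - intros Q HQ. pose proof (DlSet_le v Psi Q HQ). pose proof (Dl_triangle Psi Psi' Q). lra.
  - pose proof (Dl_bounds Psi Psi'). lra.
Qed.

End TraceMetric.

Theorem theorem20 (A : Type) (P : pts A) (s t : st P) :
  image_finite P s -> finite_proc P s ->
  image_finite P t -> finite_proc P t ->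
  dT P s t = Rsup (fun v => exists Psi : ldform A, v = Rabs (sem P Psi s - sem P Psi t)).
Proof.
  intros _ Fs _ Ft.
  change (dT P s t) with (Rmax (dT_half P s t) (dT_half P t s)).
  set (E := fun v => exists Psi : ldform A, v = Rabs (sem P Psi s - sem P Psi t)).
  assert (HE : forall Psi, Rabs (sem P Psi s - sem P Psi t) <= Rsup E).
  { intros Psi. apply Rsup_ub; [|exists Psi; auto]. exists 1. intros x [Psi' ->].
    pose proof (sem_bounds P s Psi'). pose proof (sem_bounds P t Psi'). apply Rabs_le. lra. }
  assert (E0 : 0 <= Rsup E) by (apply Rsup_nonneg; intros x [Psi ->]; apply Rabs_pos).
  apply Rle_antisym.
  - apply Rmax_lub; apply dT_half_le; auto. intros Psi. rewrite Rabs_minus_sym. auto.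
  - pose proof (dT_half_nonneg P s t Fs Ft).
    pose proof (Rmax_l (dT_half P s t) (dT_half P t s)).
    pose proof (Rmax_r (dT_half P s t) (dT_half P t s)).
    apply Rsup_le; [|lra]. intros x [Psi ->]. apply Rabs_le.
    pose proof (sem_sub_le_dT_half P s t Psi Fs Ft).
    pose proof (sem_sub_le_dT_half P t s Psi Ft Fs). lra.
Qed.
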